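(* For every constant $d>1$, every (deterministic) $d$-approximation algorithm for the sum of a sorted list of nonnegative numbers must, in the worst case, make $\Omega\!\left(\min\!\left(\log n,\ \log\frac{x_{max}}{x_{min}}\right)\right)$ (adaptive) queries to the input list, where $n$ is the length of the list and $x_{max}$ and $x_{min}$ are the largest and the least positive elements of the input list, respectively.
   Context: The input is a list $a_1\le a_2\le\cdots\le a_n$ of nonnegative reals sorted in nondecreasing order; the algorithm accesses it only by adaptive queries, each revealing one entry $a_i$. A real number $s$ is a $d$-approximation for the sum if $\frac{1}{d}\sum_{i=1}^n a_i\le s\le d\sum_{i=1}^n a_i$. *)

From Stdlib Require Import Reals Lra List Sorted.
Import ListNotations.
Open Scope R_scope.

(* A deterministic adaptive query algorithm, as a decision tree:
   either output an estimate, or query index i (0-based) and continue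
   depending on the revealed value. *)
Inductive qalg : Type :=
| Output : R -> qalg
| Query : nat -> (R -> qalg) -> qalg.

Fixpoint run (t : qalg) (a : list R) : R * nat :=
  match t with
  | Output s => (s, 0%nat)
  | Query i k => let r := run (k (nth i a 0)) a in (fst r, S (snd r))
  end.

Definition lsum (a : list R) : R := fold_right Rplus 0 a.

Definition valid_input (a : list R) : Prop :=
  Forall (fun x => 0 <= x) a /\ Sorted Rle a.

Definition d_approx (d s S : R) : Prop := S / d <= s /\ s <= d * S.

(* The list has a positive element, so x_min (least positive element) exists. *)
Definition has_pos (a : list R) : Prop := exists x, In x a /\ 0 < x.

(* x_max / x_min <= r : every element is at most r times every positive element. *)
Definition ratio_le (a : list R) (r : R) : Prop :=
  forall x y, In x a -> In y a -> 0 < x -> y <= r * x.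

(* The adversary answers the algorithm's queries from the "harmonic" input
   a_i = 1/(n-i) (for n-i <= r, and 0 otherwise), whose sum is about
   min(ln n, ln r).  Once the queries Q are fixed, the staircase
   b_i = max {a_q | q in Q, q <= i} is another sorted nonnegative input that
   agrees with a on Q, so the algorithm gives the same answer on a and b;
   being a d-approximation on both forces sum a <= d^2 sum b.  But b is
   dominated by the sum over q in Q of the step a_q on [q, n), whose mass
   (n-q) a_q is at most 1, so sum b <= |Q|. *)
From Stdlib Require Import Reals List Lra Lia Sorted.
Import ListNotations.
Open Scope R_scope.

Lemma ln_le x y : 0 < x -> x <= y -> ln x <= ln y.
Proof.
  intros Hx Hxy; destruct (Rle_lt_or_eq_dec _ _ Hxy) as [Hlt | ->].
  - left; apply ln_increasing; assumption.
  - apply Rle_refl.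
Qed.

Lemma ln_1_plus_le x : 0 < 1 + x -> ln (1 + x) <= x.
Proof.
  intros Hx; rewrite <- (ln_exp x) at 2.
  apply ln_le; [assumption | apply exp_ineq1_le].
Qed.

(* [ln] is [0] on nonpositive arguments. *)
Lemma ln_pos_inv x : 0 < ln x -> 1 < x.
Proof.
  intros Hln; destruct (Rlt_dec 0 x) as [Hx | Hx].
  - destruct (Rle_dec x 1) as [Hx1 | Hx1]; [| lra].
    pose proof (ln_le _ _ Hx Hx1); rewrite ln_1 in *; lra.
  - unfold ln in Hln; destruct (Rlt_dec 0 x); [contradiction | lra].
Qed.

Lemma ln_Rmin x y : 0 < x -> 0 < y -> ln (Rmin x y) = Rmin (ln x) (ln y).
Proof.
  intros Hx Hy; destruct (Rle_dec x y) as [Hxy | Hxy].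
  - rewrite !Rmin_left; [reflexivity | apply ln_le |]; lra.
  - rewrite !Rmin_right; [reflexivity | apply ln_le |]; lra.
Qed.

Lemma d_approx_sum_le d s S T :
  0 < d -> d_approx d s S -> d_approx d s T -> S <= d * d * T.
Proof.
  intros Hd [HS _] [_ HT].
  replace S with (d * (S / d)) by (field; lra).
  rewrite Rmult_assoc; apply Rmult_le_compat_l; lra.
Qed.

Lemma lsum_app l1 l2 : lsum (l1 ++ l2) = lsum l1 + lsum l2.
Proof. induction l1 as [| x l IH]; unfold lsum in *; simpl; [| rewrite IH]; lra. Qed.

Lemma lsum_map_le {A : Type} (g h : A -> R) l :
  (forall x, In x l -> g x <= h x) -> lsum (map g l) <= lsum (map h l).
Proof.
  induction l as [| x l IH]; intros Hgh; unfold lsum in *; simpl; [lra |].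
  apply Rplus_le_compat; [apply Hgh; left | apply IH; intros; apply Hgh; right]; auto.
Qed.

Lemma lsum_map_le_length {A : Type} (g : A -> R) l :
  (forall x, In x l -> g x <= 1) -> lsum (map g l) <= INR (length l).
Proof.
  induction l as [| x l IH]; intros Hg; unfold lsum in *;
    cbn [map fold_right length]; [simpl; lra |].
  rewrite S_INR; specialize (IH (fun y Hy => Hg y (or_intror Hy))).
  specialize (Hg x (or_introl eq_refl)); lra.
Qed.

Lemma lsum_map_plus {A : Type} (g h : A -> R) l :
  lsum (map (fun x => g x + h x) l) = lsum (map g l) + lsum (map h l).
Proof. induction l; unfold lsum in *; simpl; lra. Qed.

Lemma lsum_map_comm {A B : Type} (T : A -> B -> R) (l1 : list A) (l2 : list B) :
  lsum (map (fun y => lsum (map (fun x => T x y) l1)) l2)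
  = lsum (map (fun x => lsum (map (fun y => T x y) l2)) l1).
Proof.
  induction l2 as [| y l2 IH]; simpl.
  - induction l1; unfold lsum in *; simpl; lra.
  - change (lsum (map (fun x => T x y) l1)
            + lsum (map (fun y => lsum (map (fun x => T x y) l1)) l2)
            = lsum (map (fun x => T x y + lsum (map (fun y => T x y) l2)) l1)).
    rewrite lsum_map_plus, IH; reflexivity.
Qed.

Lemma lsum_seq_indicator (q n : nat) (v : R) :
  lsum (map (fun i => if (q <=? i)%nat then v else 0) (seq 0 n)) = INR (n - q) * v.
Proof.
  induction n as [| n IH]; [unfold lsum; simpl; lra |].
  rewrite seq_S, map_app, lsum_app, IH; unfold lsum; cbn [map fold_right Nat.add].
  destruct (Nat.leb_spec q n).
  - replace (S n - q)%nat with (S (n - q)) by lia; rewrite S_INR; lra.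
  - replace (S n - q)%nat with (n - q)%nat by lia; lra.
Qed.

Lemma fold_Rmax_nonneg l : 0 <= fold_right Rmax 0 l.
Proof. induction l; simpl; [lra | eapply Rle_trans; [eassumption | apply Rmax_r]]. Qed.

Lemma fold_Rmax_ub l x : In x l -> x <= fold_right Rmax 0 l.
Proof.
  induction l as [| y l IH]; simpl; intros Hx; [contradiction |].
  destruct Hx as [-> | Hx].
  - apply Rmax_l.
  - eapply Rle_trans; [apply IH, Hx | apply Rmax_r].
Qed.

Lemma fold_Rmax_lub l x :
  0 <= x -> (forall y, In y l -> y <= x) -> fold_right Rmax 0 l <= x.
Proof.
  induction l as [| y l IH]; intros Hx Hl; simpl; [assumption |].
  apply Rmax_lub; [apply Hl; left | apply IH; [| intros; apply Hl; right]]; auto.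
Qed.

Lemma fold_Rmax_le_lsum l :
  (forall y, In y l -> 0 <= y) -> fold_right Rmax 0 l <= lsum l.
Proof.
  induction l as [| y l IH]; intros Hl; unfold lsum in *; simpl; [lra |].
  pose proof (Hl y (or_introl eq_refl)).
  pose proof (IH (fun z Hz => Hl z (or_intror Hz))).
  pose proof (fold_Rmax_nonneg l).
  apply Rmax_lub; lra.
Qed.

Lemma fold_Rmax_map_le {A : Type} (g h : A -> R) l :
  (forall x, g x <= h x) -> fold_right Rmax 0 (map g l) <= fold_right Rmax 0 (map h l).
Proof.
  intros Hgh; induction l as [| x l IH]; simpl; [lra |].
  apply Rmax_lub; eapply Rle_trans; [apply Hgh | apply Rmax_l | apply IH | apply Rmax_r].
Qed.

Lemma length_map_seq {A : Type} (g : nat -> A) n : length (map g (seq 0 n)) = n.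
Proof. rewrite length_map, length_seq; reflexivity. Qed.

Lemma nth_map_seq (g : nat -> R) n i :
  (i < n)%nat -> nth i (map g (seq 0 n)) 0 = g i.
Proof.
  intros Hi; rewrite (nth_indep _ 0 (g 0%nat)) by (rewrite length_map_seq; lia).
  rewrite map_nth, seq_nth; auto.
Qed.

Lemma Sorted_map_seq (g : nat -> R) s len :
  (forall i, (s <= i)%nat -> (S i < s + len)%nat -> g i <= g (S i)) ->
  Sorted Rle (map g (seq s len)).
Proof.
  revert s; induction len as [| len IH]; intros s Hg; simpl; constructor.
  - apply IH; intros i Hi Hl; apply Hg; lia.
  - destruct len; simpl; constructor; apply Hg; lia.
Qed.

Lemma valid_input_map_seq (g : nat -> R) n :
  (forall i, 0 <= g i) -> (forall i, (S i < n)%nat -> g i <= g (S i)) ->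
  valid_input (map g (seq 0 n)).
Proof.
  intros Hpos Hmono; split.
  - apply Forall_map, Forall_forall; auto.
  - apply Sorted_map_seq; auto.
Qed.

Lemma valid_input_nth_nonneg a i : valid_input a -> 0 <= nth i a 0.
Proof.
  intros [Hpos _]; destruct (Nat.lt_ge_cases i (length a)).
  - rewrite Forall_forall in Hpos; apply Hpos, nth_In; assumption.
  - rewrite nth_overflow by assumption; lra.
Qed.

Lemma Sorted_Rle_nth a q i :
  Sorted Rle a -> (q <= i < length a)%nat -> nth q a 0 <= nth i a 0.
Proof.
  intros Hs; apply Sorted_StronglySorted in Hs; [| exact Rle_trans].
  revert q i; induction Hs as [| x l Hs IH Hx]; intros q i Hqi; simpl in *; [lia |].
  destruct q as [| q], i as [| i]; try lia.
  - lra.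
  - rewrite Forall_forall in Hx; apply Hx, nth_In; lia.
  - apply IH; lia.
Qed.

Fixpoint queries (t : qalg) (a : list R) : list nat :=
  match t with
  | Output _ => []
  | Query i k => i :: queries (k (nth i a 0)) a
  end.

Lemma run_queries_length t a : snd (run t a) = length (queries t a).
Proof. induction t; simpl; auto. Qed.

Lemma run_eq_on_queries t a b :
  (forall i, In i (queries t a) -> nth i b 0 = nth i a 0) -> run t b = run t a.
Proof.
  induction t as [s | i k IH]; intros Hab; simpl in *; [reflexivity |].
  rewrite (Hab i (or_introl eq_refl)), IH; auto.
Qed.

Section Staircase.

Variable a : list R.
Hypothesis a_valid : valid_input a.
Variable Q : list nat.

Let n := length a.

Definition step_at (q i : nat) : R := if (q <=? i)%nat then nth q a 0 else 0.

Definition staircase : list R :=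
  map (fun i => fold_right Rmax 0 (map (fun q => step_at q i) Q)) (seq 0 n).

Lemma step_at_nonneg q i : 0 <= step_at q i.
Proof. unfold step_at; destruct (q <=? i)%nat; [apply valid_input_nth_nonneg |]; auto; lra. Qed.

Lemma length_staircase : length staircase = n.
Proof. apply length_map_seq. Qed.

Lemma staircase_valid : valid_input staircase.
Proof.
  apply valid_input_map_seq; [intros; apply fold_Rmax_nonneg |].
  intros i _; apply fold_Rmax_map_le; intros q; unfold step_at.
  destruct (Nat.leb_spec q i), (Nat.leb_spec q (S i)); try lia;
    [lra | apply valid_input_nth_nonneg; auto | lra].
Qed.

Lemma nth_staircase_queried i : In i Q -> nth i staircase 0 = nth i a 0.
Proof.
  intros HiQ; destruct (Nat.lt_ge_cases i n) as [Hi | Hi].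
  - unfold staircase; rewrite nth_map_seq by assumption.
    apply Rle_antisym.
    + apply fold_Rmax_lub; [apply valid_input_nth_nonneg; auto |].
      intros y Hy; apply in_map_iff in Hy; destruct Hy as [q [<- _]].
      unfold step_at; destruct (Nat.leb_spec q i).
      * apply Sorted_Rle_nth; [apply a_valid | lia].
      * apply valid_input_nth_nonneg; auto.
    + replace (nth i a 0) with (step_at i i) by (unfold step_at; rewrite Nat.leb_refl; auto).
      apply fold_Rmax_ub, (in_map (fun q => step_at q i)); assumption.
  - rewrite !nth_overflow; [reflexivity | | rewrite length_staircase]; assumption.
Qed.

(* Each step [step_at q] carries mass [(n - q) a_q]; the staircase is below their sum. *)
Lemma lsum_staircase_le :
  lsum staircase <= lsum (map (fun q => INR (n - q) * nth q a 0) Q).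
Proof.
  unfold staircase; eapply Rle_trans.
  - apply (lsum_map_le _ (fun i => lsum (map (fun q => step_at q i) Q))).
    intros i _; apply fold_Rmax_le_lsum.
    intros y Hy; apply in_map_iff in Hy; destruct Hy as [q [<- _]]; apply step_at_nonneg.
  - rewrite lsum_map_comm; apply lsum_map_le; intros q _.
    unfold step_at; rewrite lsum_seq_indicator; apply Rle_refl.
Qed.

End Staircase.

Lemma approx_sum_le_query_mass d A a :
  0 < d ->
  (forall b, length b = length a -> valid_input b -> d_approx d (fst (run A b)) (lsum b)) ->
  valid_input a ->
  lsum a <= d * d * lsum (map (fun q => INR (length a - q) * nth q a 0) (queries A a)).
Proof.
  intros Hd HA Ha.
  set (b := staircase a (queries A a)).
  assert (Hrun : run A b = run A a)
    by (apply run_eq_on_queries; intros; apply nth_staircase_queried; assumption).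
  eapply Rle_trans.
  - apply (d_approx_sum_le d (fst (run A a))); [assumption | apply HA; auto |].
    rewrite <- Hrun; apply HA; [apply length_staircase | apply staircase_valid; assumption].
  - apply Rmult_le_compat_l; [nra | apply lsum_staircase_le; assumption].
Qed.

(* [/ 0 = 0] in Stdlib, so [harmonic_weight r 0 = 0]. *)
Definition harmonic_weight (r : R) (m : nat) : R :=
  if Rle_dec (INR m) r then / INR m else 0.

Definition harmonic_input (n : nat) (r : R) : list R :=
  map (fun i => harmonic_weight r (n - i)) (seq 0 n).

Lemma harmonic_weight_0 r : harmonic_weight r 0 = 0.
Proof. unfold harmonic_weight; simpl; rewrite Rinv_0; destruct (Rle_dec 0 r); auto. Qed.

Lemma harmonic_weight_nonneg r m : 0 <= harmonic_weight r m.
Proof.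
  destruct m as [| m]; [rewrite harmonic_weight_0; lra |].
  unfold harmonic_weight; destruct (Rle_dec (INR (S m)) r); [| lra].
  left; apply Rinv_0_lt_compat, lt_0_INR; lia.
Qed.

Lemma harmonic_weight_antitone r m1 m2 :
  (1 <= m1 <= m2)%nat -> harmonic_weight r m2 <= harmonic_weight r m1.
Proof.
  intros Hm; unfold harmonic_weight.
  assert (1 <= INR m1) by (apply (le_INR 1); lia).
  assert (INR m1 <= INR m2) by (apply le_INR; lia).
  destruct (Rle_dec (INR m2) r), (Rle_dec (INR m1) r); try lra.
  - apply Rinv_le_contravar; lra.
  - left; apply Rinv_0_lt_compat; lra.
Qed.

Lemma harmonic_weight_le_1 r m : (1 <= m)%nat -> harmonic_weight r m <= 1.
Proof.
  intros Hm; unfold harmonic_weight; assert (1 <= INR m) by (apply (le_INR 1); lia).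
  destruct (Rle_dec (INR m) r); [rewrite <- Rinv_1; apply Rinv_le_contravar |]; lra.
Qed.

Lemma harmonic_weight_mass r m : INR m * harmonic_weight r m <= 1.
Proof.
  destruct m as [| m]; [rewrite harmonic_weight_0; lra |].
  unfold harmonic_weight; destruct (Rle_dec (INR (S m)) r); [| lra].
  assert (0 < INR (S m)) by (apply lt_0_INR; lia).
  rewrite Rinv_r; lra.
Qed.

Lemma harmonic_weight_pos r m : 0 < harmonic_weight r m -> 1 <= r * harmonic_weight r m.
Proof.
  unfold harmonic_weight; destruct (Rle_dec (INR m) r) as [Hm | Hm]; [| lra].
  intros Hpos; assert (0 < INR m).
  { destruct m as [| m]; [simpl in Hpos; rewrite Rinv_0 in Hpos; lra |].
    apply lt_0_INR; lia. }
  apply (Rmult_le_compat_r (/ INR m)) in Hm; [| lra].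
  rewrite Rinv_r in Hm by lra; assumption.
Qed.

Lemma nth_harmonic_input n r q : nth q (harmonic_input n r) 0 = harmonic_weight r (n - q).
Proof.
  destruct (Nat.lt_ge_cases q n).
  - apply (nth_map_seq (fun i => harmonic_weight r (n - i))); assumption.
  - rewrite nth_overflow by (unfold harmonic_input; rewrite length_map_seq; lia).
    replace (n - q)%nat with 0%nat by lia; rewrite harmonic_weight_0; reflexivity.
Qed.

Lemma harmonic_input_valid n r : valid_input (harmonic_input n r).
Proof.
  apply valid_input_map_seq; [intros; apply harmonic_weight_nonneg |].
  intros i Hi; apply harmonic_weight_antitone; lia.
Qed.

Lemma harmonic_input_ratio n r : ratio_le (harmonic_input n r) r.
Proof.
  intros x y Hx Hy Hxpos; unfold harmonic_input in Hx, Hy.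
  apply in_map_iff in Hx, Hy; destruct Hx as [i [<- _]], Hy as [j [<- Hj]].
  apply in_seq in Hj.
  pose proof (harmonic_weight_pos _ _ Hxpos).
  pose proof (harmonic_weight_le_1 r (n - j) ltac:(lia)); lra.
Qed.

Lemma harmonic_input_has_pos n r : (1 <= n)%nat -> 1 <= r -> has_pos (harmonic_input n r).
Proof.
  intros Hn Hr; exists (harmonic_weight r 1); split.
  - apply in_map_iff; exists (n - 1)%nat; split; [f_equal; lia | apply in_seq; lia].
  - unfold harmonic_weight; simpl; destruct (Rle_dec 1 r); [rewrite Rinv_1 |]; lra.
Qed.

Lemma lsum_harmonic_input n r : 1 <= r -> ln (Rmin (INR n + 1) r) <= lsum (harmonic_input n r).
Proof.
  intros Hr; induction n as [| n IH].
  - unfold lsum; simpl; rewrite Rmin_left, Rplus_0_l, ln_1; lra.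
  - assert (Hsum : lsum (harmonic_input (S n) r)
                   = harmonic_weight r (S n) + lsum (harmonic_input n r)).
    { unfold harmonic_input; cbn [seq map]; rewrite <- seq_shift, map_map; reflexivity. }
    rewrite Hsum; unfold harmonic_weight at 1; rewrite !S_INR in *.
    pose proof (pos_INR n).
    destruct (Rle_dec (INR n + 1) r).
    + rewrite Rmin_left in IH by lra.
      assert (Hstep : ln (INR n + 1 + 1) <= ln (INR n + 1) + / (INR n + 1)).
      { replace (INR n + 1 + 1) with ((INR n + 1) * (1 + / (INR n + 1))) by (field; lra).
        assert (0 < / (INR n + 1)) by (apply Rinv_0_lt_compat; lra).
        rewrite ln_mult by lra; pose proof (ln_1_plus_le (/ (INR n + 1))); lra. }
      pose proof (ln_le (Rmin (INR n + 1 + 1) r) (INR n + 1 + 1)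
                    ltac:(apply Rmin_glb_lt; lra) (Rmin_l _ _)); lra.
    + rewrite Rmin_right in * by lra; lra.
Qed.

Theorem theorem2 :
  forall d : R, 1 < d ->
  exists c M : R, 0 < c /\
    forall (n : nat) (r : R) (A : qalg),
      (forall a : list R, length a = n -> valid_input a ->
         d_approx d (fst (run A a)) (lsum a)) ->
      M <= Rmin (ln (INR n)) (ln r) ->
      exists a : list R,
        length a = n /\ valid_input a /\ has_pos a /\ ratio_le a r /\
        c * Rmin (ln (INR n)) (ln r) <= INR (snd (run A a)).
Proof.
  intros d Hd; exists (/ (d * d)), 1; split; [apply Rinv_0_lt_compat; nra |].
  intros n r A HA HM.
  assert (Hn : 1 < INR n) by (apply ln_pos_inv; pose proof (Rmin_l (ln (INR n)) (ln r)); lra).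
  assert (Hr : 1 < r) by (apply ln_pos_inv; pose proof (Rmin_r (ln (INR n)) (ln r)); lra).
  assert (Hn1 : (1 <= n)%nat) by (destruct n; simpl in Hn; [lra | lia]).
  set (a := harmonic_input n r).
  assert (Hlen : length a = n) by apply length_map_seq.
  assert (Hlower : Rmin (ln (INR n)) (ln r) <= lsum a).
  { rewrite <- ln_Rmin by lra; eapply Rle_trans; [| apply lsum_harmonic_input; lra].
    apply ln_le; [apply Rmin_glb_lt |]; [lra | lra |].
    apply Rle_min_compat_r; lra. }
  assert (Hupper : lsum a <= d * d * INR (snd (run A a))).
  { rewrite run_queries_length; eapply Rle_trans.
    - apply (approx_sum_le_query_mass d); [lra | rewrite Hlen; exact HA | apply harmonic_input_valid].
    - apply Rmult_le_compat_l; [nra |]; apply lsum_map_le_length; intros q _.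
      rewrite Hlen; unfold a; rewrite nth_harmonic_input; apply harmonic_weight_mass. }
  exists a; split; [assumption | split; [| split; [| split]]].
  - apply harmonic_input_valid.
  - apply harmonic_input_has_pos; [assumption | lra].
  - apply harmonic_input_ratio.
  - apply (Rmult_le_reg_l (d * d)); [nra |].
    rewrite <- Rmult_assoc, Rinv_r by nra; lra.
Qed.
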